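(* Let $X$ be a real Banach space and $M\subseteq X$ a topologically linearly independent set such that $M\cup\{0_X\}$ is a free basis of $X$. Let $N=\{m/\|m\| : m\in M\}$. Then there is an isomorphism of Banach spaces (bounded linear bijection with bounded inverse) $\phi\colon X\to\ell^1(N)$ with $\phi(n)=e_n$ for every $n\in N$, where $e_n$ is the indicator of $\{n\}$. In particular, $M$ is a (long) Schauder basis of $X$.
   Context: A subset $A\subseteq X\setminus\{0\}$ of a topological vector space $X$ is topologically linearly independent if for every neighborhood $W$ of $0$ there is a neighborhood $U$ of $0$ such that for every finite $F\subseteq A$ and reals $\{r_a: a\in F\}$, $\sum_{a\in F}r_a a\in U$ implies $r_a a\in W$ for all $a\in F$. A free basis of a Banach space $X$ is a closed subset $N_0\subseteq X$ containing $0_X$ such that for every Banach space $Y$ and every Lipschitz map $f\colon N_0\to Y$ with $f(0_X)=0_Y$ there is a unique bounded linear map $\hat f\colon X\to Y$ extending $f$. For a set $N$, $\ell^1(N)$ is the Banach space of all $x=(x_n)_{n\in N}$ with $\|x\|=\sum_{n\in N}|x_n|<\infty$ (so only countably many $x_n$ are nonzero). *)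

From HB Require Import structures.
From mathcomp Require Import all_boot all_order all_algebra.
From mathcomp Require Import all_classical all_reals all_analysis.
Set Implicit Arguments. Unset Strict Implicit. Unset Printing Implicit Defensive.
Import Order.TTheory GRing.Theory Num.Theory.
Import numFieldNormedType.Exports.
Local Open Scope classical_set_scope.
Local Open Scope ring_scope.

Definition is_linear (R : realType) (X Y : normedModType R) (g : X -> Y) :=
  forall (a : R) (x y : X), g (a *: x + y) = a *: g x + g y.

Definition is_bounded (R : realType) (X Y : normedModType R) (g : X -> Y) :=
  exists C : R, forall x : X, `|g x| <= C * `|x|.

Definition top_lin_indep (R : realType) (X : normedModType R) (A : set X) :=
  A `<=` ~` [set 0] /\
  forall W : set X, nbhs (0 : X) W ->
  exists U : set X, nbhs (0 : X) U /\
    forall (F : seq X) (r : X -> R),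
      uniq F -> (forall a, a \in F -> A a) ->
      U (\sum_(a <- F) r a *: a) ->
      forall a, a \in F -> W (r a *: a).

Definition lipschitz_on (R : realType) (X Y : normedModType R) (S : set X)
  (f : X -> Y) :=
  exists L : R, forall x y, S x -> S y -> `|f x - f y| <= L * `|x - y|.

(* A map N0 -> Y is represented by
   a total function X -> Y of which only the values on N0 matter. *)
Definition free_basis (R : realType) (X : completeNormedModType R) (N0 : set X) :=
  closed N0 /\ N0 0 /\
  forall (Y : completeNormedModType R) (f : X -> Y),
    lipschitz_on N0 f -> f 0 = 0 ->
    (exists g : X -> Y, [/\ is_linear g, is_bounded g & forall x, N0 x -> g x = f x]) /\
    (forall g1 g2 : X -> Y,
        is_linear g1 -> is_bounded g1 -> (forall x, N0 x -> g1 x = f x) ->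
        is_linear g2 -> is_bounded g2 -> (forall x, N0 x -> g2 x = f x) ->
        g1 = g2).

(* ell^1(N) for N : set T, represented as functions T -> R vanishing off N
   whose absolute values have finite (unordered) sum over N. *)
Definition ell1 (R : realType) (T : choiceType) (N : set T) : set (T -> R) :=
  [set u | (forall t, ~ N t -> u t = 0) /\
           (\esum_(t in N) (`|u t|%:E) < +oo)%E].

Definition ell1_norm (R : realType) (T : choiceType) (N : set T) (u : T -> R) : R :=
  fine (\esum_(t in N) (`|u t|%:E))%E.

Definition unit_vec (R : realType) (T : choiceType) (n : T) : T -> R :=
  fun t => if t == n then 1 else 0.

From Pilot Require Import Defs.
From HB Require Import structures.
From mathcomp Require Import all_boot all_order all_algebra.
From mathcomp Require Import all_classical all_reals all_analysis.
From mathcomp Require Import ring lra.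
Import Order.TTheory GRing.Theory Num.Theory.
Import numFieldNormedType.Exports.
Set Implicit Arguments. Unset Strict Implicit. Unset Printing Implicit Defensive.
Local Open Scope classical_set_scope.
Local Open Scope ring_scope.

(* Topological linear independence gives a uniform [d > 0] with
   [d * |r_a a| <= |sum_b r_b b|], so the points of [M `|` [set 0]] are uniformly
   separated and every map on them that is bounded by the norm is Lipschitz.
   Extending [m |-> (c |-> sgn (c (m / |m|)) * |m|)] to a bounded linear
   [G : X -> linfty (X -> R)] gives coordinates [x |-> G x (e_n)]; testing [G x]
   against sign patterns and using uniqueness of extensions bounds the l1 norm of
   the coordinates by [|G| * |x|].  Hence [sum_n x_n n] converges unconditionally;
   as a bounded linear map equal to the identity on the free basis it is the
   identity, which gives injectivity and the lower bound, and surjectivity follows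
   by applying the continuous coordinates to [sum_n u_n n]. *)

Section LinearMaps.
Variables (R : realType) (X Y : normedModType R) (g : X -> Y).
Hypothesis g_lin : is_linear g.

Lemma is_linear0 : g 0 = 0.
Proof. by have := g_lin (-1) 0 0; rewrite scaleN1r oppr0 addr0 scaleN1r addNr. Qed.

Lemma is_linearD x y : g (x + y) = g x + g y.
Proof. by have := g_lin 1 x y; rewrite !scale1r. Qed.

Lemma is_linearZ a x : g (a *: x) = a *: g x.
Proof. by have := g_lin a x 0; rewrite addr0 is_linear0 addr0. Qed.

Lemma is_linearB x y : g (x - y) = g x - g y.
Proof. by rewrite -scaleN1r addrC g_lin scaleN1r addrC. Qed.

Lemma is_linear_sum (I : Type) (s : seq I) (F : I -> X) :
  g (\sum_(i <- s) F i) = \sum_(i <- s) g (F i).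
Proof.
elim: s => [|i s IHs]; first by rewrite !big_nil is_linear0.
by rewrite !big_cons is_linearD IHs.
Qed.

Lemma bounded_linear_lipschitz {S : set X} : is_bounded g -> Defs.lipschitz_on S g.
Proof. by move=> [C gC]; exists C => x y _ _; rewrite -is_linearB gC. Qed.

End LinearMaps.

Lemma free_basis_ext (R : realType) (X Y : completeNormedModType R) (N0 : set X)
    (g1 g2 : X -> Y) :
  free_basis N0 -> is_linear g1 -> is_bounded g1 -> is_linear g2 -> is_bounded g2 ->
  (forall x, N0 x -> g1 x = g2 x) -> g1 = g2.
Proof.
move=> [_ [_ N0free]] g1l g1b g2l g2b g12.
have [_ uniq_ext] := N0free Y g1 (bounded_linear_lipschitz g1l g1b) (is_linear0 g1l).
by apply: uniq_ext => // x /g12.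
Qed.

Section Linfty.
Variables (R : realType) (I : choiceType).

Definition sup_bounded : {pred I -> R} :=
  mem [set f : I -> R | exists B, forall i, `|f i| <= B].

Record linfty :=
  Linfty { linfty_fun :> I -> R; linfty_funP : linfty_fun \in sup_bounded }.
HB.instance Definition _ := [isSub for linfty_fun].
HB.instance Definition _ := [Choice of linfty by <:].

Lemma sup_bounded_zmod_closed : zmod_closed sup_bounded.
Proof.
split; first by rewrite inE; exists 0 => i; rewrite normr0.
move=> f g; rewrite !inE => -[B fB] [B' gB']; exists (B + B') => i.
by rewrite /= (le_trans (ler_normB _ _))// lerD.
Qed.
HB.instance Definition _ :=
  GRing.isZmodClosed.Build (I -> R) sup_bounded sup_bounded_zmod_closed.
HB.instance Definition _ := [SubChoice_isSubZmodule of linfty by <:].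

Lemma sup_bounded_scaler_closed : scaler_closed sup_bounded.
Proof.
move=> a f; rewrite !inE => -[B fB]; exists (`|a| * B) => i.
by rewrite /= normrM ler_wpM2l.
Qed.
HB.instance Definition _ :=
  GRing.isScaleClosed.Build R (I -> R) sup_bounded sup_bounded_scaler_closed.
HB.instance Definition _ := [SubZmodule_isSubLmodule of linfty by <:].

(* The [0] makes the supremum of the empty family (when [I] is empty) equal to [0]. *)
Definition sup_norm (f : linfty) : R := sup ([set 0] `|` range (fun i => `|f i|)).

Lemma sup_norm_has_sup (f : linfty) : has_sup ([set 0] `|` range (fun i => `|f i|)).
Proof.
split; first by exists 0; left.
case: f => f /=; rewrite inE => -[B fB]; exists (Num.max B 0).
by move=> _ [->|[i _ <-]]; rewrite le_max ?lexx ?fB ?orbT.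
Qed.

Lemma ler_sup_norm (f : linfty) i : `|f i| <= sup_norm f.
Proof. by apply: (ub_le_sup (proj2 (sup_norm_has_sup f))); right; exists i. Qed.

Lemma sup_norm_ge0 (f : linfty) : 0 <= sup_norm f.
Proof. by apply: (ub_le_sup (proj2 (sup_norm_has_sup f))); left. Qed.

Lemma sup_norm_le (f : linfty) B : 0 <= B -> (forall i, `|f i| <= B) -> sup_norm f <= B.
Proof.
move=> B0 fB; apply: ge_sup; first by exists 0; left.
by move=> _ [->|[i _ <-]].
Qed.

Lemma sup_normD (f g : linfty) : sup_norm (f + g) <= sup_norm f + sup_norm g.
Proof.
apply: sup_norm_le; first by rewrite addr_ge0 ?sup_norm_ge0.
by move=> i; rewrite (le_trans (ler_normD _ _))// lerD ?ler_sup_norm.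
Qed.

Lemma sup_normZ (a : R) (f : linfty) : sup_norm (a *: f) = `|a| * sup_norm f.
Proof.
have normZ_le (b : R) (h : linfty) : sup_norm (b *: h) <= `|b| * sup_norm h.
  apply: sup_norm_le; first by rewrite mulr_ge0 ?sup_norm_ge0.
  by move=> i; rewrite /= normrM ler_wpM2l ?ler_sup_norm.
apply/eqP; rewrite eq_le normZ_le /=.
have [->|a0] := eqVneq a 0; first by rewrite normr0 mul0r sup_norm_ge0.
have := normZ_le a^-1 (a *: f).
rewrite scalerA mulVf // scale1r normrV ?unitfE // => le_f.
by rewrite -(ler_pM2l (_ : 0 < `|a|^-1)) ?invr_gt0 ?normr_gt0// mulKf ?normr_eq0.
Qed.

Lemma sup_norm_eq0 (f : linfty) : sup_norm f = 0 -> f = 0.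
Proof.
move=> f0; apply: val_inj; apply/funext => i /=.
by apply/normr0_eq0/eqP; rewrite eq_le normr_ge0 andbT -f0 ler_sup_norm.
Qed.

HB.instance Definition _ :=
  Lmodule_isNormed.Build R linfty sup_normD sup_normZ sup_norm_eq0.

Lemma ler_linfty_dist (f g : linfty) i : `|f i - g i| <= `|f - g|.
Proof. exact: ler_sup_norm (f - g) i. Qed.

Lemma linfty_complete (F : set_system linfty) : ProperFilter F -> cauchy F -> cvg F.
Proof.
move=> PF /cauchyP Fc.
have Fi_cvg i : cvg ((fun f : linfty => f i) @ F).
  apply: cauchy_cvg; apply/cauchyP => e e0.
  have [f Ff] := Fc e e0; exists (f i).
  suff: F [set g : linfty | ball (f i) e (g i)] by [].
  apply: filterS Ff => g; rewrite -!ball_normE /=.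
  exact: le_lt_trans (ler_linfty_dist _ _ _).
pose l i := lim ((fun f : linfty => f i) @ F).
have near_l e : 0 < e -> exists f, F (ball f e) /\ forall i, `|f i - l i| <= e.
  move=> e0; have [f Ff] := Fc e e0; exists f; split => // i.
  apply/ler_addgt0Pr => eta eta0.
  have /cvgrPdist_lt/(_ eta eta0) Fl := Fi_cvg i.
  have [g [/= fg lg]] := filter_ex (filterI Ff Fl).
  move: fg; rewrite -ball_normE /= => fg.
  rewrite (le_trans (ler_distD (g i) _ _))// ltW// ltrD//; last by rewrite distrC.
  exact: le_lt_trans (ler_linfty_dist _ _ _) fg.
have l_bounded : l \in sup_bounded.
  have [f [_ fl]] := near_l 1 ltr01; rewrite inE; exists (sup_norm f + 1) => i.
  rewrite -[l i](subrKC (f i)) (le_trans (ler_normD _ _))// lerD ?ler_sup_norm//.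
  by rewrite distrC.
apply/cvg_ex; exists (Linfty l_bounded); apply/cvgrPdist_lt => e e0.
have [f [Ff fl]] := near_l (e / 2) (divr_gt0 e0 (ltr0n _ 2)).
apply: filterS Ff => g; rewrite -ball_normE /= => fg.
rewrite -(subrKA f) (le_lt_trans (ler_normD _ _))// [e]splitr ler_ltD//.
apply: sup_norm_le; first by rewrite divr_ge0 ?ltW.
by move=> i; rewrite /= distrC.
Qed.

HB.instance Definition _ := Uniform_isComplete.Build linfty linfty_complete.

End Linfty.

Lemma big_seq_pred1 (V : zmodType) (T : eqType) (A : seq T) (a : T) (F : T -> V) :
  uniq A -> \sum_(t <- A | t == a) F t = if a \in A then F a else 0.
Proof.
move=> uA; case: ifP => aA; last first.
  by rewrite big1_seq // => t /andP[/eqP-> ]; rewrite aA.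
by rewrite big_mkcond (bigD1_seq a) //= eqxx big1 ?addr0 // => t /negbTE ->.
Qed.

Section UnorderedSums.
Variables (R : realType) (I : choiceType) (N : set I).

Definition finseq_in (A : seq I) := uniq A /\ forall i, i \in A -> N i.

Lemma finseq_in_undup_cat A B : finseq_in A -> finseq_in B -> finseq_in (undup (A ++ B)).
Proof.
move=> [_ AN] [_ BN]; split; first exact: undup_uniq.
by move=> i; rewrite mem_undup mem_cat => /orP[/AN|/BN].
Qed.

Lemma finseq_in_filter A (P : pred I) : finseq_in A -> finseq_in [seq i <- A | P i].
Proof.
move=> [uA AN]; split; first exact: filter_uniq.
by move=> i; rewrite mem_filter => /andP[_ /AN].
Qed.

Lemma sub_undup_catl (A B : seq I) : {subset A <= undup (A ++ B)}.
Proof. by move=> i iA; rewrite mem_undup mem_cat iA. Qed.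

Lemma sub_undup_catr (A B : seq I) : {subset B <= undup (A ++ B)}.
Proof. by move=> i iB; rewrite mem_undup mem_cat iB orbT. Qed.

Lemma big_uniq_subset_split (V : zmodType) (F : I -> V) (A0 A : seq I) :
  uniq A0 -> uniq A -> {subset A0 <= A} ->
  \sum_(i <- A) F i = \sum_(i <- A0) F i + \sum_(i <- [seq i <- A | i \notin A0]) F i.
Proof.
move=> uA0 uA A0A; rewrite (bigID (mem A0)) /=.
rewrite -[\sum_(i <- A | i \in A0) F i]big_filter -[\sum_(i <- A | _) F i]big_filter.
congr (_ + _).
apply: perm_big; apply: uniq_perm => //; first exact: filter_uniq.
by move=> i; rewrite mem_filter; case: (boolP (i \in A0)) => //= /A0A ->.
Qed.

Variable V : normedModType R.
Implicit Types (f : I -> V) (s : V).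

Definition has_usum f s := forall e : R, 0 < e -> exists2 A0, finseq_in A0 &
  forall A, finseq_in A -> {subset A0 <= A} -> `|s - \sum_(i <- A) f i| <= e.

Definition abs_summable f :=
  exists B, forall A, finseq_in A -> \sum_(i <- A) `|f i| <= B.

Lemma usum_unique f s s' : has_usum f s -> has_usum f s' -> s = s'.
Proof.
move=> fs fs'; apply/eqP; rewrite -subr_eq0 -normr_le0.
apply/ler_addgt0Pr => e e0; rewrite add0r [e]splitr.
have [A0 A0N A0s] := fs _ (divr_gt0 e0 (ltr0n _ 2)).
have [A1 A1N A1s] := fs' _ (divr_gt0 e0 (ltr0n _ 2)).
have AN := finseq_in_undup_cat A0N A1N.
rewrite -(subrKA (\sum_(i <- undup (A0 ++ A1)) f i)) (le_trans (ler_normD _ _))//.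
rewrite lerD ?(A0s _ AN (@sub_undup_catl _ _))// distrC.
exact: A1s AN (@sub_undup_catr _ _).
Qed.

Lemma usum_norm_le f s B : has_usum f s ->
  (forall A, finseq_in A -> \sum_(i <- A) `|f i| <= B) -> `|s| <= B.
Proof.
move=> fs fB; apply/ler_addgt0Pr => e e0.
have [A0 A0N A0s] := fs _ e0.
rewrite -(subrK (\sum_(i <- A0) f i) s) addrC (le_trans (ler_normD _ _))// lerD//.
- exact: le_trans (ler_norm_sum _ _ _) (fB _ A0N).
- exact: A0s.
Qed.

Lemma usumD f g s s' : has_usum f s -> has_usum g s' ->
  has_usum (fun i => f i + g i) (s + s').
Proof.
move=> fs gs' e e0; have e2 : 0 < e / 2 by rewrite divr_gt0.
have [A0 A0N A0s] := fs _ e2; have [A1 A1N A1s'] := gs' _ e2.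
exists (undup (A0 ++ A1)); first exact: finseq_in_undup_cat.
move=> A AN sub; rewrite big_split opprD addrACA [e]splitr.
rewrite (le_trans (ler_normD _ _))// lerD//.
  by apply: A0s => // i /(@sub_undup_catl _ _) /sub.
by apply: A1s' => // i /(@sub_undup_catr _ _) /sub.
Qed.

Lemma usum_single f i : N i -> (forall j, N j -> j != i -> f j = 0) -> has_usum f (f i).
Proof.
move=> Ni f0 e e0; exists [:: i] => [|A [uA AN] sub].
  by split=> // j; rewrite inE => /eqP ->.
rewrite (bigD1_seq i) ?sub ?mem_head//= big1_seq ?addr0 ?subrr ?normr0 ?ltW//.
by move=> j /andP[ji /AN Nj]; apply: f0.
Qed.

Section AbsTail.
Variable f : I -> V.

Definition abs_tail_le (A0 : seq I) (e : R) := forall A, finseq_in A ->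
  (forall i, i \in A -> i \notin A0) -> \sum_(i <- A) `|f i| <= e.

Lemma abs_summable_tail : abs_summable f ->
  forall e : R, 0 < e -> exists A0, finseq_in A0 /\ abs_tail_le A0 e.
Proof.
move=> [B fB] e e0.
pose S := [set \sum_(i <- A) `|f i| | A in finseq_in].
have S_sup : has_sup S.
  split; first by exists 0, [::]; rewrite ?big_nil.
  by exists B => _ [A AN <-]; apply: fB.
have [_ [A0 A0N <-] ltA0] := sup_adherent e0 S_sup; exists A0; split=> // A AN A_A0.
have A0AN : finseq_in (A0 ++ A).
  split; last by move=> i; rewrite mem_cat => /orP[/A0N.2|/AN.2].
  rewrite cat_uniq A0N.1 AN.1 andbT /=; apply/hasPn => i /A_A0 //.
have := ub_le_sup S_sup.2 (ex_intro2 _ _ _ A0AN erefl).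
rewrite big_cat /=; lra.
Qed.

(* [U] minus [A] is disjoint from [A0]. *)
Lemma abs_tail_superset_dist A0 e A U : abs_tail_le A0 e -> finseq_in A ->
  {subset A0 <= A} -> finseq_in U -> {subset A <= U} ->
  `|\sum_(i <- U) f i - \sum_(i <- A) f i| <= e.
Proof.
move=> A0e AN A0A UN AU.
rewrite (big_uniq_subset_split _ AN.1 UN.1 AU) addrAC subrr add0r.
apply: le_trans (ler_norm_sum _ _ _) (A0e _ (finseq_in_filter _ UN) _).
by move=> i; rewrite mem_filter => /andP[iA _]; apply: contra iA; apply: A0A.
Qed.

Lemma abs_tail_dist A0 A1 e1 e2 A B : abs_tail_le A0 e1 -> abs_tail_le A1 e2 ->
  finseq_in A -> {subset A0 <= A} -> finseq_in B -> {subset A1 <= B} ->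
  `|\sum_(i <- A) f i - \sum_(i <- B) f i| <= e1 + e2.
Proof.
move=> A0e1 A1e2 AN A0A BN A1B; have UN := finseq_in_undup_cat AN BN.
rewrite -(subrKA (\sum_(i <- undup (A ++ B)) f i)) (le_trans (ler_normD _ _))//.
rewrite distrC lerD ?(abs_tail_superset_dist A0e1) ?(abs_tail_superset_dist A1e2)//.
  exact: sub_undup_catl.
exact: sub_undup_catr.
Qed.

End AbsTail.
End UnorderedSums.

Lemma usum_linear (R : realType) (I : choiceType) (N : set I) (V W : normedModType R)
    (g : V -> W) (f : I -> V) (s : V) :
  is_linear g -> is_bounded g -> has_usum N f s -> has_usum N (g \o f) (g s).
Proof.
move=> gl [C gC] fs e e0; have C1 : 0 < `|C| + 1 by rewrite ltr_wpDl.
have [A0 A0N A0s] := fs _ (divr_gt0 e0 C1); exists A0 => // A AN sub.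
rewrite -is_linear_sum// -is_linearB// (le_trans (gC _))//.
apply: le_trans (ler_wpM2r (normr_ge0 _) (_ : C <= `|C| + 1)) _.
  by rewrite (le_trans (ler_norm C)) ?lerDl.
by rewrite -ler_pdivlMl// mulrC A0s.
Qed.

Lemma usumZ (R : realType) (I : choiceType) (N : set I) (V : normedModType R)
    (a : R) (f : I -> V) (s : V) :
  has_usum N f s -> has_usum N (fun i => a *: f i) (a *: s).
Proof.
apply: (@usum_linear _ _ _ _ _ ( *:%R a)).
  by move=> b x y; rewrite scalerDr scalerA mulrC scalerA.
by exists `|a| => x; rewrite normrZ.
Qed.

Lemma abs_summable_usum (R : realType) (I : choiceType) (N : set I)
    (V : completeNormedModType R) (f : I -> V) :
  abs_summable N f -> exists s, has_usum N f s.
Proof.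
move=> fsum; pose eps (k : nat) : R := k.+1%:R^-1.
have eps_gt0 k : 0 < eps k by rewrite invr_gt0.
have [A tailA] := choice (fun k => abs_summable_tail fsum (eps_gt0 k)).
pose S k := \sum_(i <- A k) f i.
have S_dist j k B : finseq_in N B -> {subset A k <= B} ->
    `|S j - \sum_(i <- B) f i| <= eps j + eps k.
  exact: abs_tail_dist (tailA j).2 (tailA k).2 (tailA j).1 (fun _ => id).
have /cauchy_cvg S_cvg : cauchy (S @ \oo).
  apply/cauchyP => e e0.
  have [K _ KS] := near_infty_natSinv_lt (PosNum (divr_gt0 e0 (ltr0n _ 2))).
  exists (S K); apply: filterS (nbhs_infty_ge K) => j /= Kj; rewrite -ball_normE /=.
  apply: le_lt_trans (S_dist K j _ (tailA j).1 (fun _ => id)) _.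
  by rewrite [e]splitr; exact: ltrD (KS K (leqnn K)) (KS j Kj).
exists (lim (S @ \oo)) => e e0; have e3 : 0 < e / 3 by rewrite divr_gt0.
have [K _ KS] := near_infty_natSinv_lt (PosNum e3).
exists (A K); first exact: (tailA K).1.
move=> B BN AKB; have [J _ JS] := (cvgrPdist_lt _ _).1 S_cvg _ e3.
pose j := maxn J K.
rewrite -(subrKA (S j)) (le_trans (ler_normD _ _))//.
rewrite (le_trans (lerD (ltW (JS j (leq_maxl _ _))) (S_dist j K B BN AKB)))//.
have Kj : eps j < e / 3 := KS j (leq_maxr _ _).
have KK : eps K < e / 3 := KS K (leqnn _).
lra.
Qed.

Section Ell1.
Variables (R : realType) (T : choiceType) (N : set T) (u : T -> R).

Lemma esum_abs_le B : (forall A, finseq_in N A -> \sum_(t <- A) `|u t| <= B) ->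
  (\esum_(t in N) (`|u t|%:E) <= B%:E)%E.
Proof.
move=> uB; apply: ge_ereal_sup => _ [S [finS SN] <-].
rewrite fsbig_finite // sumEFin lee_fin; apply: uB; split; first exact: finmap.fset_uniq.
by move=> t; rewrite in_fset_set // inE => /SN.
Qed.

Lemma ell1_sum_le_norm A : ell1 N u -> finseq_in N A ->
  \sum_(t <- A) `|u t| <= ell1_norm N u.
Proof.
move=> [_ u_fin] [uA AN].
have fin : (\esum_(t in N) (`|u t|%:E))%E \is a fin_num.
  by rewrite ge0_fin_numE // esum_ge0 // => t _; rewrite lee_fin.
rewrite /ell1_norm -lee_fin fineK //; apply: esum_ge; exists [set` A].
  by split; [exact: finite_seq | move=> t /= tA; exact: AN].
by rewrite -fsbig_seq // sumEFin.
Qed.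

End Ell1.

Definition normalize (R : realType) (X : normedModType R) (x : X) : X := `|x|^-1 *: x.

Lemma norm_normalize (R : realType) (X : normedModType R) (x : X) :
  x != 0 -> `|normalize x| = 1.
Proof.
by move=> x0; rewrite normrZ normfV normr_id mulVf // normr_eq0.
Qed.

Lemma scale_norm_normalize (R : realType) (X : normedModType R) (x : X) :
  `|x| *: normalize x = x.
Proof.
have [->|x0] := eqVneq x 0; first by rewrite normr0 scale0r.
by rewrite scalerA mulfV ?scale1r // normr_eq0.
Qed.

Section TopLinIndep.
Variables (R : realType) (X : normedModType R) (M : set X).
Hypothesis M_tli : top_lin_indep M.

Lemma top_lin_indep_neq0 m : M m -> m != 0.
Proof. by case: M_tli => + _ => /(_ m) M0 /M0 /eqP. Qed.

(* [d] is the radius of a ball inside the neighbourhood [U] attached to [W = ball 0 1];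
   rescaling the sum by [|r_a a|^-1] would put it in [U] and [r_a a] outside [W]. *)
Lemma top_lin_indep_coef_bound : exists2 d : R, 0 < d &
  forall (F : seq X) (r : X -> R), uniq F -> (forall a, a \in F -> M a) ->
  forall a, a \in F -> `|r a *: a| * d <= `|\sum_(b <- F) r b *: b|.
Proof.
case: M_tli => _ /(_ (ball (0 : X) 1) (nbhsx_ballx _ _ ltr01)).
move=> [U [/nbhs_ballP [d d0 dU] UW]]; exists d => // F r uF FM a aF.
rewrite leNgt; apply/negP => small_sum.
have ra_gt0 : 0 < `|r a *: a| by rewrite -(pmulr_lgt0 _ d0) (le_lt_trans _ small_sum).
pose k := `|r a *: a|^-1.
have /(UW _ _ uF FM) /(_ a aF) : U (\sum_(b <- F) (k * r b) *: b).
  apply: dU; rewrite -ball_normE /= sub0r normrN.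
  under eq_bigr do rewrite -scalerA; rewrite -scaler_sumr normrZ.
  by rewrite ger0_norm ?invr_ge0 // ltr_pdivrMl // mulrC.
rewrite -ball_normE /= sub0r normrN -scalerA normrZ ger0_norm ?invr_ge0 //.
by rewrite mulVf ?gt_eqF // ltxx.
Qed.

Lemma top_lin_indep_sep : exists2 d : R, 0 < d &
  forall m m', M m -> M m' -> m != m' -> `|m| * d <= `|m - m'|.
Proof.
have [d d0 dM] := top_lin_indep_coef_bound; exists d => // m m' Mm Mm' mm'.
have := dM [:: m; m'] (fun b => if b == m then 1 else -1).
rewrite /= inE mm' big_cons big_seq1 eqxx eq_sym (negbTE mm') scale1r scaleN1r.
have mM : forall a, a \in [:: m; m'] -> M a by move=> a; rewrite !inE => /orP[] /eqP ->.
by move=> /(_ isT mM m (mem_head _ _)); rewrite eqxx scale1r.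
Qed.

Lemma norm_add_le_dist : exists2 L : R, 1 <= L &
  forall x y, (M `|` [set 0]) x -> (M `|` [set 0]) y -> x != y ->
  `|x| + `|y| <= L * `|x - y|.
Proof.
have [d d0 dM] := top_lin_indep_sep.
have L1 : 1 <= 2 / d + 1 by rewrite lerDr divr_ge0 ?ltW.
exists (2 / d + 1) => // x y [Mx|->] [My|->] xy.
- have := dM _ _ Mx My xy; have := dM _ _ My Mx; rewrite distrC eq_sym => /(_ xy).
  rewrite -!ler_pdivlMr // => yd xd.
  have -> : (2 / d + 1) * `|x - y| = `|x - y| / d + `|x - y| / d + `|x - y| by ring.
  by rewrite (le_trans (lerD xd yd)) // lerDl.
- by rewrite normr0 addr0 subr0 ler_peMl.
- by rewrite normr0 add0r sub0r normrN ler_peMl.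
- by rewrite eqxx in xy.
Qed.

Lemma lipschitz_on_of_norm_le (Y : normedModType R) (h : X -> Y) :
  (forall x, (M `|` [set 0]) x -> `|h x| <= `|x|) -> Defs.lipschitz_on (M `|` [set 0]) h.
Proof.
move=> h_le; have [L L1 LN] := norm_add_le_dist; exists L => x y Nx Ny.
have [->|xy] := eqVneq x y; first by rewrite !subrr !normr0 mulr0.
by rewrite (le_trans (ler_normB _ _)) // (le_trans _ (LN _ _ Nx Ny xy)) // lerD ?h_le.
Qed.

(* Coordinates of [linfty (X -> R)] are indexed by test functions [c]: the embedding
   records on [m \in M] the sign of [c] at [normalize m], so testing against an
   indicator extracts a coefficient and testing against a sign pattern an l1 norm. *)
Definition sign_coord (x : X) (c : X -> R) : R :=
  if `[< M x >] then Num.sg (c (normalize x)) * `|x| else 0.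

Lemma norm_sign_coord_le x c : `|sign_coord x c| <= `|x|.
Proof.
rewrite /sign_coord; case: ifP => _; last by rewrite normr0.
by rewrite normrM normr_id ler_piMl // normr_sg; case: (_ != 0).
Qed.

Lemma sign_coord_bounded x : sign_coord x \in @sup_bounded R (X -> R).
Proof. by rewrite inE; exists `|x| => c; apply: norm_sign_coord_le. Qed.

Definition sign_embedding (x : X) : linfty R (X -> R) := Linfty (sign_coord_bounded x).

Lemma norm_sign_embedding_le x : `|sign_embedding x| <= `|x|.
Proof. by apply: sup_norm_le => //; apply: norm_sign_coord_le. Qed.

Lemma sign_embedding0 : sign_embedding 0 = 0.
Proof.
apply: val_inj; apply/funext => c /=; rewrite /sign_coord.
by case: ifP => // /asboolP /top_lin_indep_neq0; rewrite eqxx.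
Qed.

End TopLinIndep.

Section Coordinates.
Variables (R : realType) (X : completeNormedModType R) (M : set X).
Hypotheses (M_tli : top_lin_indep M) (M_free : free_basis (M `|` [set 0])).
Variable G : X -> linfty R (X -> R).
Hypotheses (G_lin : is_linear G) (G_bnd : is_bounded G)
  (G_ext : forall x, (M `|` [set 0]) x -> G x = sign_embedding M x).

Let N := [set normalize m | m in M].

Definition basis_coord (x t : X) : R := if `[< N t >] then G x (unit_vec R t) else 0.

Lemma basis_coord_lin a x y t :
  basis_coord (a *: x + y) t = a * basis_coord x t + basis_coord y t.
Proof. by rewrite /basis_coord; case: ifP; rewrite ?mulr0 ?addr0 // G_lin. Qed.

Lemma basis_coord_linear t : is_linear (fun x => basis_coord x t : R^o).
Proof. by move=> a x y; rewrite basis_coord_lin. Qed.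

Lemma basis_coordZ a x t : basis_coord (a *: x) t = a * basis_coord x t.
Proof. exact: (is_linearZ (basis_coord_linear t)). Qed.

Lemma norm_basis_coord_le x t : `|basis_coord x t| <= `|G x|.
Proof.
by rewrite /basis_coord; case: ifP => _; rewrite ?normr0 ?normr_ge0 ?ler_sup_norm.
Qed.

Lemma basis_coord_bounded t : is_bounded (fun x => basis_coord x t : R^o).
Proof.
by have [C GC] := G_bnd; exists C => x; exact: le_trans (norm_basis_coord_le x t) (GC x).
Qed.

Lemma basis_coordM m t : M m -> basis_coord m t = if t == normalize m then `|m| else 0.
Proof.
move=> Mm; rewrite /basis_coord; case: ifP => [_|/asboolPn Nt].
  rewrite G_ext /=; last by left.
  rewrite /sign_coord asboolT // /unit_vec eq_sym.
  by case: ifP; rewrite ?sgr1 ?sgr0 ?mul1r ?mul0r.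
by case: ifP => // /eqP tm; case: Nt; rewrite tm; exists m.
Qed.

Lemma norm_unit_basis t : N t -> `|t| = 1.
Proof. by move=> [m Mm <-]; rewrite norm_normalize // (top_lin_indep_neq0 M_tli). Qed.

Lemma basis_coord_unit n : N n -> basis_coord n = unit_vec R n.
Proof.
move=> [m Mm <-]; apply/funext => t.
rewrite basis_coordZ basis_coordM // /unit_vec.
by case: ifP => _; rewrite ?mulr0 // mulVf // normr_eq0 (top_lin_indep_neq0 M_tli Mm).
Qed.

(* Testing [G x] against the sign pattern of [basis_coord x] on [A] yields the
   l1 norm over [A]; the two sides agree because they agree on the free basis. *)
Lemma sum_abs_basis_coord_le : exists C, forall x A, finseq_in N A ->
  \sum_(t <- A) `|basis_coord x t| <= C * `|x|.
Proof.
have [C GC] := G_bnd; exists C => x A [uA AN].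
pose c s := if s \in A then Num.sg (basis_coord x s) else 0.
pose h1 z : R^o := G z c.
pose h2 z : R^o := \sum_(t <- A) c t * basis_coord z t.
have h1_lin : is_linear h1 by move=> a y z; rewrite /h1 G_lin.
have h1_bnd : is_bounded h1.
  by exists C => z; exact: le_trans (ler_sup_norm _ _) (GC z).
have h2_lin : is_linear h2.
  move=> a y z; rewrite /h2 /GRing.scale /= mulr_sumr -big_split /=.
  by apply: eq_bigr => t _; rewrite basis_coord_lin mulrDr mulrCA.
have h2_bnd : is_bounded h2.
  exists (\sum_(t <- A) C) => z; rewrite mulr_suml (le_trans (ler_norm_sum _ _ _))//.
  apply: ler_sum => t _; rewrite normrM -[C * _]mul1r.
  apply: ler_pM; rewrite ?normr_ge0 //.
    by rewrite /c; case: ifP => _; rewrite ?normr0 // normr_sg; case: (_ != 0).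
  exact: le_trans (norm_basis_coord_le z t) (GC z).
have h12 : forall z, (M `|` [set 0]) z -> h1 z = h2 z.
  move=> z [Mz|->]; last by rewrite (is_linear0 h1_lin) (is_linear0 h2_lin).
  rewrite /h1 /h2 G_ext /=; last by left.
  under eq_bigr do rewrite basis_coordM // (fun_if (GRing.mul _)) mulr0.
  rewrite -big_mkcond big_seq_pred1 // /sign_coord asboolT // /c.
  by case: ifP => _; rewrite ?sgr0 ?mul0r ?sgr_id.
have -> : \sum_(t <- A) `|basis_coord x t| = h2 x.
  by rewrite big_seq [RHS]big_seq; apply: eq_bigr => t tA; rewrite /c tA normrEsg.
rewrite -(free_basis_ext M_free h1_lin h1_bnd h2_lin h2_bnd h12).
exact: le_trans (ler_norm _) (le_trans (ler_sup_norm _ _) (GC x)).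
Qed.

Lemma basis_coord_ell1 x : ell1 N (basis_coord x).
Proof.
have [C coordC] := sum_abs_basis_coord_le.
split=> [t Nt|]; first by rewrite /basis_coord asboolF.
apply: le_lt_trans (esum_abs_le (coordC x)) _; exact: ltry.
Qed.

Lemma ell1_norm_basis_coord_le :
  exists C, forall x, ell1_norm N (basis_coord x) <= C * `|x|.
Proof.
have [C coordC] := sum_abs_basis_coord_le; exists C => x.
have fin : (\esum_(t in N) (`|basis_coord x t|%:E))%E \is a fin_num.
  by rewrite ge0_fin_numE ?(basis_coord_ell1 x).2 ?esum_ge0 // => t _; rewrite lee_fin.
exact: fine_le fin _ (esum_abs_le (coordC x)).
Qed.

Lemma sum_norm_scale_unit_basis (u : X -> R) A : finseq_in N A ->
  \sum_(t <- A) `|u t *: t| = \sum_(t <- A) `|u t|.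
Proof.
move=> [_ AN]; rewrite !big_seq; apply: eq_bigr => t /AN Nt.
by rewrite normrZ norm_unit_basis ?mulr1.
Qed.

Lemma has_usum_basis_coordM m : M m -> has_usum N (fun t => basis_coord m t *: t) m.
Proof.
move=> Mm; have Nm : N (normalize m) by exists m.
have := @usum_single _ _ N _ (fun t => basis_coord m t *: t) _ Nm.
rewrite basis_coordM // eqxx scale_norm_normalize; apply=> t _ tm.
by rewrite basis_coordM // (negbTE tm) scale0r.
Qed.

Definition reconstruct (x : X) : X := xget 0 (has_usum N (fun t => basis_coord x t *: t)).

Lemma reconstructP x : has_usum N (fun t => basis_coord x t *: t) (reconstruct x).
Proof.
apply: xgetPex; apply: abs_summable_usum; have [C coordC] := sum_abs_basis_coord_le.
by exists (C * `|x|) => A AN; rewrite sum_norm_scale_unit_basis // coordC.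
Qed.

Lemma reconstruct_id x : reconstruct x = x.
Proof.
have [C coordC] := sum_abs_basis_coord_le.
have rec_lin : is_linear reconstruct.
  move=> a y z; apply: usum_unique (reconstructP _) _.
  under eq_fun do rewrite basis_coord_lin scalerDl -scalerA.
  exact: usumD (usumZ a (reconstructP y)) (reconstructP z).
have rec_bnd : is_bounded reconstruct.
  exists C => y; apply: usum_norm_le (reconstructP y) _ => A AN.
  by rewrite sum_norm_scale_unit_basis // coordC.
have id_lin : is_linear (@id X) by [].
have id_bnd : is_bounded (@id X) by exists 1 => y; rewrite mul1r.
suff -> : reconstruct = id by [].
apply: (free_basis_ext M_free rec_lin rec_bnd id_lin id_bnd) => y [My|->].
  exact: usum_unique (reconstructP y) (has_usum_basis_coordM My).
exact: is_linear0 rec_lin.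
Qed.

Lemma basis_coord_inj : injective basis_coord.
Proof.
by move=> x y xy; rewrite -(reconstruct_id x) -(reconstruct_id y) /reconstruct xy.
Qed.

Lemma norm_le_ell1_norm_basis_coord x : `|x| <= ell1_norm N (basis_coord x).
Proof.
rewrite -{1}(reconstruct_id x); apply: usum_norm_le (reconstructP x) _ => A AN.
by rewrite sum_norm_scale_unit_basis // ell1_sum_le_norm //; apply: basis_coord_ell1.
Qed.

(* Each [basis_coord _ t] is continuous, so it commutes with the unordered sum. *)
Lemma basis_coord_surj u : ell1 N u -> exists x, basis_coord x = u.
Proof.
move=> u_ell1; have [s us] : exists s, has_usum N (fun t => u t *: t) s.
  apply: abs_summable_usum; exists (ell1_norm N u) => A AN.
  by rewrite sum_norm_scale_unit_basis // ell1_sum_le_norm.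
exists s; apply/funext => t; have [Nt|Nt] := pselect (N t); last first.
  by rewrite /basis_coord asboolF // u_ell1.1.
have ut : basis_coord (u t *: t) t = u t.
  by rewrite basis_coordZ basis_coord_unit // /unit_vec eqxx mulr1.
have /usum_unique := usum_linear (basis_coord_linear t) (basis_coord_bounded t) us.
rewrite -ut; apply; apply: usum_single => // t' Nt' t't.
by rewrite /= basis_coordZ basis_coord_unit // /unit_vec eq_sym (negbTE t't) mulr0.
Qed.

End Coordinates.

Theorem theorem4p9 (R : realType) (X : completeNormedModType R) (M : set X) :
  top_lin_indep M ->
  free_basis (M `|` [set 0]) ->
  let N := [set (`|m|)^-1 *: m | m in M] in
  exists phi : X -> (X -> R),
    (forall (a : R) (x y : X) (t : X), phi (a *: x + y) t = a * phi x t + phi y t) /\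
    (forall x, ell1 N (phi x)) /\
    (forall x y, phi x = phi y -> x = y) /\
    (forall u, ell1 N u -> exists x, phi x = u) /\
    (exists C : R, forall x, ell1_norm N (phi x) <= C * `|x|) /\
    (exists C : R, forall x, `|x| <= C * ell1_norm N (phi x)) /\
    (forall n, N n -> phi n = unit_vec R n).
Proof.
move=> M_tli M_free N.
have [G [G_lin G_bnd G_ext]] := (M_free.2.2 _ (sign_embedding M)
  (lipschitz_on_of_norm_le M_tli (fun x _ => norm_sign_embedding_le M x))
  (sign_embedding0 M_tli)).1.
exists (basis_coord M G); split; first exact: basis_coord_lin.
split; first exact (basis_coord_ell1 M_free G_lin G_bnd G_ext).
split; first exact (basis_coord_inj M_tli M_free G_lin G_bnd G_ext).
split; first by move=> u /(basis_coord_surj M_tli G_lin G_bnd G_ext).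
split; first exact (ell1_norm_basis_coord_le M_free G_lin G_bnd G_ext).
split; last by move=> n /(basis_coord_unit M_tli G_lin G_ext).
exists 1 => x; rewrite mul1r.
exact (norm_le_ell1_norm_basis_coord M_tli M_free G_lin G_bnd G_ext x).
Qed.
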